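(* Assume Assumptions 1–4 (stated in the context) hold, with the periodic boundary specification, and assume the discount factor $\beta$ is sufficiently large. Then there exists $L_1<\infty$, independent of $\theta,z,t$, such that for every $\theta\in\Theta$ the function $h_\theta$ is locally Lipschitz continuous with Lipschitz constant $L_1$.
   Context: Local Lipschitz continuity with constant $L$ means: there is $\delta>0$ such that $|f(y_1)-f(y_2)|\le L|y_1-y_2|$ whenever $|y_1-y_2|<\delta$. A state is $s=(x,z,t)$; policies $\pi_\theta(a\mid s)$, $a\in\{0,1\}$, $\theta\in\Theta$. $F$ is the distribution of $(Y(1),Y(0),W,X)$ (also the marginal of $x$); $r(x,1)=E[Y(1)-Y(0)\mid x]$. $G_0,G_1$ are known functions of $s$, $\lambda(t)>0$ is a known arrival rate and $\beta$ is a discount rate. Define $$\bar r_\theta(z,t)=E_{x\sim F}[r(x,1)\pi_\theta(1\mid s)],\qquad \bar G_\theta(z,t)=E_{x\sim F}[G_1\pi_\theta(1\mid s)+G_0\pi_\theta(0\mid s)].$$ Assume $\lambda,\bar G_\theta,\bar r_\theta$ are $T_p$-periodic in $t$. $h_\theta$ is the bounded, continuous, $T_p$-periodic (in $t$) viscosity solution on $\mathbb R\times\mathbb R$ of $\beta h-\lambda(t)\bar G_\theta\partial_z h-\partial_t h-\lambda(t)\bar r_\theta=0$. Assumption 1: $\bar G_\theta,\bar r_\theta$ are Lipschitz uniformly in $\theta$; $\lambda$ is bounded, Lipschitz and bounded away from 0; $|\bar r_\theta|,|\bar G_\theta|\le M$. Assumption 2: $|Y(a)|,|G_a(s)|\le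 M$; the classes $\{\pi_\theta(1\mid\cdot,z,t)\}$ and $\{\pi_\theta(a\mid\cdot,z,t)G_a(\cdot,z,t)\}$ (indexed by $(z,t),\theta$) are VC-subgraph with finite indices. Assumption 3: $Y(a,z,t)\equiv Y(a)$; the data are iid from $F$; $(Y(1),Y(0))\perp\!\!\!\perp W\mid X$; $p(x)=E[W\mid X=x]\in[\kappa,1-\kappa]$. Assumption 4: the nonparametric estimators of $E[Y(w)\mid X=x]$ and $p(x)$ converge in sup norm at rate $O_p(n^{-c})$ for some $c>0$ and in mean square at rate $n^{-\xi}$ for some $\xi>1/2$. *)

From Stdlib Require Import Reals Lra.
From Coquelicot Require Import Coquelicot.
Open Scope R_scope.

Definition dist2 (z1 t1 z2 t2 : R) : R :=
  sqrt ((z1 - z2) ^ 2 + (t1 - t2) ^ 2).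

Definition cont2_at (f : R -> R -> R) (z0 t0 : R) : Prop :=
  forall eps, 0 < eps -> exists delta, 0 < delta /\
    forall z t, dist2 z t z0 t0 < delta -> Rabs (f z t - f z0 t0) < eps.

Definition cont2 (f : R -> R -> R) : Prop := forall z t, cont2_at f z t.

Definition C1_with (phi phiz phit : R -> R -> R) : Prop :=
  cont2 phiz /\ cont2 phit /\
  (forall z t, is_derive (fun z' => phi z' t) z (phiz z t)) /\
  (forall z t, is_derive (fun t' => phi z t') t (phit z t)).

Definition loc_max2 (u : R -> R -> R) (z0 t0 : R) : Prop :=
  exists r, 0 < r /\ forall z t, dist2 z t z0 t0 < r -> u z t <= u z0 t0.
Definition loc_min2 (u : R -> R -> R) (z0 t0 : R) : Prop :=
  exists r, 0 < r /\ forall z t, dist2 z t z0 t0 < r -> u z0 t0 <= u z t.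

(* Hamiltonian of  beta h - lam(t) Gb(z,t) d_z h - d_t h - lam(t) rb(z,t) = 0 *)
Definition Ham (beta : R) (lam : R -> R) (Gb rb : R -> R -> R)
  (z t u pz pt : R) : R :=
  beta * u - lam t * Gb z t * pz - pt - lam t * rb z t.

Definition visc_sub beta lam Gb rb (h : R -> R -> R) : Prop :=
  forall phi phiz phit z0 t0, C1_with phi phiz phit ->
    loc_max2 (fun z t => h z t - phi z t) z0 t0 ->
    Ham beta lam Gb rb z0 t0 (h z0 t0) (phiz z0 t0) (phit z0 t0) <= 0.
Definition visc_super beta lam Gb rb (h : R -> R -> R) : Prop :=
  forall phi phiz phit z0 t0, C1_with phi phiz phit ->
    loc_min2 (fun z t => h z t - phi z t) z0 t0 ->
    0 <= Ham beta lam Gb rb z0 t0 (h z0 t0) (phiz z0 t0) (phit z0 t0).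
Definition visc_sol beta lam Gb rb h : Prop :=
  cont2 h /\ visc_sub beta lam Gb rb h /\ visc_super beta lam Gb rb h.

Definition lipschitz2 (L : R) (f : R -> R -> R) : Prop :=
  forall z1 t1 z2 t2, Rabs (f z1 t1 - f z2 t2) <= L * dist2 z1 t1 z2 t2.

Definition loc_lipschitz2 (L : R) (f : R -> R -> R) : Prop :=
  exists delta, 0 < delta /\
    forall z1 t1 z2 t2, dist2 z1 t1 z2 t2 < delta ->
      Rabs (f z1 t1 - f z2 t2) <= L * dist2 z1 t1 z2 t2.

Definition bounded2 (f : R -> R -> R) : Prop :=
  exists B, forall z t, Rabs (f z t) <= B.

Definition periodic_t (Tp : R) (f : R -> R -> R) : Prop :=
  forall z t, f z (t + Tp) = f z t.

From Stdlib Require Import Reals Lra Psatz Classical ClassicalEpsilon List.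
From Coquelicot Require Import Coquelicot.
Open Scope R_scope.

(* Doubling of variables.  Let LF and Lf be Lipschitz constants of λG and λr, let
   β > LF and K = Lf / (β - LF), and maximise over pairs of points of R × R
     Φ(x, y) = h(x) - h(y) - K √(ε + |x - y|²) - α (⟨x⟩ + ⟨y⟩),   ⟨x⟩ = √(1 + |x|²).
   The penalty α⟨·⟩ makes the maximum exist on the unbounded plane.  At a maximiser (x̂, ŷ), subtracting the supersolution inequality at ŷ
   from the subsolution inequality at x̂ (tested with the smooth functions read off
   from Φ) cancels the ∂t terms and leaves
     β (h(x̂) - h(ŷ)) ≤ (K LF + Lf) |x̂ - ŷ| + O(α) = β K |x̂ - ŷ| + O(α).
   Hence h(x) - h(y) ≤ K √(ε + |x - y|²) + O(α), and ε, α → 0 shows that h is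
   K-Lipschitz, with K depending on θ only through LF and Lf. *)

Lemma dist2_sym z1 t1 z2 t2 : dist2 z1 t1 z2 t2 = dist2 z2 t2 z1 t1.
Proof. unfold dist2. f_equal. ring. Qed.

Lemma dist2_ge0 z1 t1 z2 t2 : 0 <= dist2 z1 t1 z2 t2.
Proof. apply sqrt_pos. Qed.

Lemma Rabs_le_sqrt_add_sq u v : Rabs u <= sqrt (u ^ 2 + v ^ 2).
Proof.
  rewrite <- (sqrt_Rsqr_abs u). apply sqrt_le_1_alt. unfold Rsqr. nra.
Qed.

Lemma Rabs_sub_fst_le_dist2 z1 t1 z2 t2 : Rabs (z1 - z2) <= dist2 z1 t1 z2 t2.
Proof. apply Rabs_le_sqrt_add_sq. Qed.

Lemma Rabs_sub_snd_le_dist2 z1 t1 z2 t2 : Rabs (t1 - t2) <= dist2 z1 t1 z2 t2.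
Proof. unfold dist2. rewrite Rplus_comm. apply Rabs_le_sqrt_add_sq. Qed.

Lemma dist2_le_sum_Rabs z1 t1 z2 t2 :
  dist2 z1 t1 z2 t2 <= Rabs (z1 - z2) + Rabs (t1 - t2).
Proof.
  pose proof (Rabs_pos (z1 - z2)); pose proof (Rabs_pos (t1 - t2)).
  unfold dist2. rewrite <- (sqrt_Rsqr (Rabs (z1 - z2) + Rabs (t1 - t2))) by lra.
  apply sqrt_le_1_alt. unfold Rsqr.
  rewrite <- (pow2_abs (z1 - z2)), <- (pow2_abs (t1 - t2)). nra.
Qed.

Lemma Rabs_div_le_1 x y : 0 < y -> Rabs x <= y -> Rabs (x / y) <= 1.
Proof.
  intros Hy Hx. rewrite Rabs_div, (Rabs_pos_eq y) by lra.
  apply Rle_div_l; lra.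
Qed.

Lemma Rmult_le_of_Rabs_le_1 x y c : Rabs x <= 1 -> Rabs y <= c -> x * y <= c.
Proof.
  intros Hx Hy. apply Rle_trans with (Rabs (x * y)); [apply Rle_abs|].
  rewrite Rabs_mult. pose proof (Rabs_pos x); pose proof (Rabs_pos y). nra.
Qed.

Lemma cont2_at_iff_continuity_2d_pt f z t : cont2_at f z t <-> continuity_2d_pt f z t.
Proof.
  split.
  - intros Hf eps. destruct (Hf (eps / 2)) as [d [Hd Hfd]]. { destruct eps; simpl; lra. }
    exists (mkposreal (d / 2) ltac:(lra)). simpl. intros u v Hu Hv.
    apply Rlt_trans with (eps / 2); [|destruct eps; simpl; lra].
    apply Hfd. eapply Rle_lt_trans; [apply dist2_le_sum_Rabs|lra].
  - intros Hf eps Heps. destruct (Hf (mkposreal eps Heps)) as [d Hd].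
    exists d. split; [apply cond_pos|]. intros u v Huv.
    apply Hd; eapply Rle_lt_trans; [| exact Huv| |exact Huv].
    + apply Rabs_sub_fst_le_dist2.
    + apply Rabs_sub_snd_le_dist2.
Qed.

Lemma continuity_2d_pt_of_Rabs_le f z t L :
  (forall u v, Rabs (f u v - f z t) <= L * (Rabs (u - z) + Rabs (v - t))) ->
  continuity_2d_pt f z t.
Proof.
  intros Hf [eps Heps]. pose proof (Rabs_pos L) as HL.
  set (d := eps / (2 * (Rabs L + 1))).
  assert (Hd : 0 < d) by (apply Rdiv_lt_0_compat; lra).
  assert (Hdeps : (Rabs L + 1) * (2 * d) = eps) by (unfold d; field; lra).
  exists (mkposreal d Hd). simpl. intros u v Hu Hv.
  eapply Rle_lt_trans; [apply Hf|].
  pose proof (Rabs_pos (u - z)); pose proof (Rabs_pos (v - t)).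
  assert (L * (Rabs (u - z) + Rabs (v - t)) <= Rabs L * (2 * d)).
  { apply Rle_trans with (Rabs L * (Rabs (u - z) + Rabs (v - t))).
    - apply Rmult_le_compat_r; [lra|apply Rle_abs].
    - apply Rmult_le_compat_l; lra. }
  lra.
Qed.

Lemma cont2_lin A B f g :
  cont2 f -> cont2 g -> cont2 (fun z t => A * f z t + B * g z t).
Proof.
  intros Hf Hg z t. apply cont2_at_iff_continuity_2d_pt.
  apply continuity_2d_pt_plus; apply continuity_2d_pt_mult;
    try apply continuity_2d_pt_const; apply cont2_at_iff_continuity_2d_pt; auto.
Qed.

Lemma C1_with_lin A B f fz ft g gz gt :
  C1_with f fz ft -> C1_with g gz gt ->
  C1_with (fun z t => A * f z t + B * g z t)
    (fun z t => A * fz z t + B * gz z t) (fun z t => A * ft z t + B * gt z t).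
Proof.
  intros [Hfz [Hft [Hdfz Hdft]]] [Hgz [Hgt [Hdgz Hdgt]]].
  split; [|split; [|split]]; try (apply cont2_lin; assumption); intros z t.
  - apply (is_derive_plus (fun z' => A * f z' t) (fun z' => B * g z' t));
      apply is_derive_scal; auto.
  - apply (is_derive_plus (fun t' => A * f z t') (fun t' => B * g z t'));
      apply is_derive_scal; auto.
Qed.

Definition reg_dist (e a b z t : R) : R := sqrt (e + (z - a) ^ 2 + (t - b) ^ 2).

Lemma reg_dist_gt0 e a b z t : 0 < e -> 0 < reg_dist e a b z t.
Proof.
  intros He. apply sqrt_lt_R0.
  pose proof (pow2_ge_0 (z - a)); pose proof (pow2_ge_0 (t - b)); lra.
Qed.

Lemma reg_dist_sym e a b z t : reg_dist e a b z t = reg_dist e z t a b.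
Proof. unfold reg_dist. f_equal. ring. Qed.

Lemma dist2_le_reg_dist e a b z t : 0 <= e -> dist2 z t a b <= reg_dist e a b z t.
Proof. intros He. apply sqrt_le_1_alt. lra. Qed.

Lemma reg_dist_le_dist2_add_sqrt e a b z t :
  0 <= e -> reg_dist e a b z t <= dist2 z t a b + sqrt e.
Proof.
  intros He. unfold reg_dist, dist2.
  set (q := (z - a) ^ 2 + (t - b) ^ 2).
  assert (Hq : 0 <= q)
    by (unfold q; pose proof (pow2_ge_0 (z - a)); pose proof (pow2_ge_0 (t - b)); lra).
  pose proof (sqrt_pos q); pose proof (sqrt_pos e).
  rewrite <- (sqrt_Rsqr (sqrt q + sqrt e)) by lra.
  replace (e + (z - a) ^ 2 + (t - b) ^ 2) with (q + e) by (unfold q; ring).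
  apply sqrt_le_1_alt. unfold Rsqr.
  pose proof (sqrt_sqrt q Hq); pose proof (sqrt_sqrt e He). nra.
Qed.

Lemma reg_dist_lipschitz e a b z t a' b' z' t' : 0 <= e ->
  Rabs (reg_dist e a b z t - reg_dist e a' b' z' t')
    <= Rabs ((z - a) - (z' - a')) + Rabs ((t - b) - (t' - b')).
Proof.
  intros He. unfold reg_dist.
  set (u := z - a); set (v := t - b); set (u' := z' - a'); set (v' := t' - b').
  set (A := sqrt (e + u ^ 2 + v ^ 2)); set (B := sqrt (e + u' ^ 2 + v' ^ 2)).
  assert (HA : 0 <= A) by apply sqrt_pos. assert (HB : 0 <= B) by apply sqrt_pos.
  assert (HA2 : A * A = e + u ^ 2 + v ^ 2) by (apply sqrt_sqrt; nra).
  assert (HB2 : B * B = e + u' ^ 2 + v' ^ 2) by (apply sqrt_sqrt; nra).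
  assert (Hu : Rabs u <= A) by (rewrite <- (sqrt_Rsqr_abs u); apply sqrt_le_1_alt; unfold Rsqr; nra).
  assert (Hv : Rabs v <= A) by (rewrite <- (sqrt_Rsqr_abs v); apply sqrt_le_1_alt; unfold Rsqr; nra).
  assert (Hu' : Rabs u' <= B) by (rewrite <- (sqrt_Rsqr_abs u'); apply sqrt_le_1_alt; unfold Rsqr; nra).
  assert (Hv' : Rabs v' <= B) by (rewrite <- (sqrt_Rsqr_abs v'); apply sqrt_le_1_alt; unfold Rsqr; nra).
  pose proof (Rabs_pos (u - u')); pose proof (Rabs_pos (v - v')).
  destruct (Req_dec (A + B) 0) as [HAB|HAB].
  { replace (A - B) with 0 by lra. rewrite Rabs_R0. lra. }
  (* |A - B| (A + B) = |A^2 - B^2|, and each |u + u'|, |v + v'| is at most A + B. *)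
  assert (Hdiff : Rabs (A - B) * (A + B)
                  = Rabs ((u - u') * (u + u') + (v - v') * (v + v'))).
  { rewrite <- (Rabs_pos_eq (A + B)) at 1 by lra. rewrite <- Rabs_mult. f_equal. nra. }
  assert (Huu : Rabs (u + u') <= A + B) by (eapply Rle_trans; [apply Rabs_triang|lra]).
  assert (Hvv : Rabs (v + v') <= A + B) by (eapply Rle_trans; [apply Rabs_triang|lra]).
  assert (Hsum : Rabs ((u - u') * (u + u') + (v - v') * (v + v'))
                 <= (Rabs (u - u') + Rabs (v - v')) * (A + B)).
  { eapply Rle_trans; [apply Rabs_triang|]. rewrite !Rabs_mult. nra. }
  apply (Rmult_le_reg_r (A + B)); lra.
Qed.

Lemma continuity_2d_pt_reg_dist e a b z t : 0 <= e -> continuity_2d_pt (reg_dist e a b) z t.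
Proof.
  intros He. apply continuity_2d_pt_of_Rabs_le with 1. intros u v.
  rewrite Rmult_1_l. eapply Rle_trans; [apply reg_dist_lipschitz; exact He|].
  right. f_equal; f_equal; ring.
Qed.

Lemma reg_dist_C1 e a b : 0 < e ->
  C1_with (reg_dist e a b)
    (fun z t => (z - a) / reg_dist e a b z t) (fun z t => (t - b) / reg_dist e a b z t).
Proof.
  intros He.
  assert (Hq : forall z t, 0 < e + (z - a) ^ 2 + (t - b) ^ 2).
  { intros z t. pose proof (pow2_ge_0 (z - a)); pose proof (pow2_ge_0 (t - b)); lra. }
  assert (Hcont : forall f, (forall z t, continuity_2d_pt f z t) ->
            cont2 (fun z t => f z t / reg_dist e a b z t)).
  { intros f Hf z t. apply cont2_at_iff_continuity_2d_pt.
    apply continuity_2d_pt_mult; [apply Hf|].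
    apply continuity_2d_pt_inv; [apply continuity_2d_pt_reg_dist; lra|].
    apply Rgt_not_eq, reg_dist_gt0, He. }
  split; [|split; [|split]].
  - apply Hcont. intros z t. apply continuity_2d_pt_minus;
      [apply continuity_2d_pt_id1|apply continuity_2d_pt_const].
  - apply Hcont. intros z t. apply continuity_2d_pt_minus;
      [apply continuity_2d_pt_id2|apply continuity_2d_pt_const].
  - intros z t. pose proof (reg_dist_gt0 e a b z t He). unfold reg_dist in *.
    auto_derive; [apply Hq|].
    replace (e + (z + - a) * ((z + - a) * 1) + (t - b) * ((t - b) * 1))
      with (e + (z - a) ^ 2 + (t - b) ^ 2) by ring.
    field. lra.
  - intros z t. pose proof (reg_dist_gt0 e a b z t He). unfold reg_dist in *.
    auto_derive; [apply Hq|].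
    replace (e + (z - a) * ((z - a) * 1) + (t + - b) * ((t + - b) * 1))
      with (e + (z - a) ^ 2 + (t - b) ^ 2) by ring.
    field. lra.
Qed.

Lemma Rabs_sub_le_reg_dist e a b z t :
  0 <= e -> Rabs (z - a) <= reg_dist e a b z t /\ Rabs (t - b) <= reg_dist e a b z t.
Proof.
  intros He. pose proof (dist2_le_reg_dist e a b z t He).
  pose proof (Rabs_sub_fst_le_dist2 z t a b); pose proof (Rabs_sub_snd_le_dist2 z t a b).
  split; lra.
Qed.

Lemma reg_dist_grad_bounded e a b z t : 0 < e ->
  Rabs ((z - a) / reg_dist e a b z t) <= 1 /\ Rabs ((t - b) / reg_dist e a b z t) <= 1.
Proof.
  intros He. pose proof (reg_dist_gt0 e a b z t He).
  destruct (Rabs_sub_le_reg_dist e a b z t) as [Hz Ht]; [lra|].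
  split; apply Rabs_div_le_1; assumption.
Qed.

Lemma exists_max_in_list {T : Type} (P : T -> Prop) (Phi : T -> R) (x0 : T) (l : list T) :
  P x0 -> (forall t, In t l -> P t) ->
  exists w, P w /\ forall t, In t l -> Phi t <= Phi w.
Proof.
  intros Hx0. induction l as [|t l IH]; intros Hl.
  - exists x0. split; [exact Hx0|]. intros t [].
  - destruct IH as [w [Hw Hmax]]; [intros; apply Hl; right; assumption|].
    destruct (Rle_dec (Phi t) (Phi w)) as [Htw|Htw].
    + exists w. split; [exact Hw|]. intros t' [<-|Ht']; auto.
    + exists t. split; [apply Hl; left; reflexivity|].
      intros t' [<-|Ht']; [lra|]. specialize (Hmax t' Ht'). lra.
Qed.

Lemma usc_attains_max_on_box (n : nat) (Phi : Compactness.Tn n R -> R)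
  (a b x0 : Compactness.Tn n R) :
  bounded_n n a b x0 ->
  (forall p eps, 0 < eps -> exists d, 0 < d /\
     forall q, close_n n d q p -> Phi q < Phi p + eps) ->
  exists p, bounded_n n a b p /\ forall q, bounded_n n a b q -> Phi q <= Phi p.
Proof.
  intros Hx0 Husc. apply NNPP. intros Hno.
  (* Without a maximum, every point of the box has a neighbourhood dominated by a better point. *)
  assert (Hbetter : forall p, exists qd : Compactness.Tn n R * posreal,
    bounded_n n a b (fst qd) /\
    (bounded_n n a b p -> forall x, close_n n (snd qd) x p -> Phi x < Phi (fst qd))).
  { intros p. destruct (classic (bounded_n n a b p)) as [Hp|Hp].
    - assert (exists q, bounded_n n a b q /\ Phi p < Phi q) as [q [Hq Hpq]].
      { apply NNPP. intros Hnq. apply Hno. exists p. split; [exact Hp|].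
        intros q Hq. apply Rnot_lt_le. intros Hpq. apply Hnq. exists q. auto. }
      destruct (Husc p (Phi q - Phi p)) as [d [Hd Hnear]]; [lra|].
      exists (q, mkposreal d Hd). simpl. split; [exact Hq|].
      intros _ x Hx. specialize (Hnear x Hx). lra.
    - exists (x0, mkposreal 1 Rlt_0_1). simpl. split; [exact Hx0|]. contradiction. }
  set (sel := fun p => proj1_sig (constructive_indefinite_description _ (Hbetter p))).
  assert (Hsel : forall p, bounded_n n a b (fst (sel p)) /\
    (bounded_n n a b p -> forall x, close_n n (snd (sel p)) x p -> Phi x < Phi (fst (sel p)))).
  { intros p. unfold sel. destruct (constructive_indefinite_description _ _) as [qd Hqd].
    exact Hqd. }
  apply (compactness_list n a b (fun p => snd (sel p))). intros [l Hcover].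
  destruct (exists_max_in_list (bounded_n n a b) Phi x0 (map (fun t => fst (sel t)) l))
    as [w [Hw Hwmax]]; [exact Hx0| |].
  { intros q Hq. apply in_map_iff in Hq. destruct Hq as [t [<- _]]. apply Hsel. }
  destruct (Hcover w Hw) as [t [Ht [Htbox Hwt]]].
  pose proof (proj2 (Hsel t) Htbox w Hwt).
  pose proof (Hwmax (fst (sel t)) (in_map (fun t => fst (sel t)) l t Ht)). lra.
Qed.

Lemma Ham_gap_le beta lam G r x1 s1 x2 s2 w1 w2 K al u v a1 b1 a2 b2 CF LF Lf D :
  0 <= K -> 0 <= al ->
  Rabs u <= 1 -> Rabs a1 <= 1 -> Rabs b1 <= 1 -> Rabs a2 <= 1 -> Rabs b2 <= 1 ->
  Rabs (lam s1 * G x1 s1) <= CF -> Rabs (lam s2 * G x2 s2) <= CF ->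
  Rabs (lam s1 * G x1 s1 - lam s2 * G x2 s2) <= LF * D ->
  lam s1 * r x1 s1 - lam s2 * r x2 s2 <= Lf * D ->
  Ham beta lam G r x1 s1 w1 (K * u + al * a1) (K * v + al * b1) <= 0 ->
  0 <= Ham beta lam G r x2 s2 w2 (K * u - al * a2) (K * v - al * b2) ->
  beta * (w1 - w2) <= (K * LF + Lf) * D + 2 * al * (CF + 1).
Proof.
  intros HK Hal Hu Ha1 Hb1 Ha2 Hb2 HF1 HF2 HF Hr Hsub Hsup. unfold Ham in Hsub, Hsup.
  set (F1 := lam s1 * G x1 s1) in *; set (F2 := lam s2 * G x2 s2) in *.
  (* The time-derivative terms K v cancel: transport in t has unit speed. *)
  assert (Hgap : beta * (w1 - w2) <= K * (u * (F1 - F2))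
            + al * (a1 * F1 + a2 * F2 + b1 * 1 + b2 * 1)
            + (lam s1 * r x1 s1 - lam s2 * r x2 s2)).
  { unfold F1, F2 in *. lra. }
  assert (HKu : K * (u * (F1 - F2)) <= K * (LF * D)).
  { apply Rmult_le_compat_l; [exact HK|]. apply Rmult_le_of_Rabs_le_1; assumption. }
  assert (Hone : Rabs 1 <= 1) by (rewrite Rabs_R1; lra).
  assert (Hal_terms : al * (a1 * F1 + a2 * F2 + b1 * 1 + b2 * 1) <= al * (2 * (CF + 1))).
  { apply Rmult_le_compat_l; [exact Hal|].
    pose proof (Rmult_le_of_Rabs_le_1 a1 F1 CF Ha1 HF1).
    pose proof (Rmult_le_of_Rabs_le_1 a2 F2 CF Ha2 HF2).
    pose proof (Rmult_le_of_Rabs_le_1 b1 1 1 Hb1 Hone).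
    pose proof (Rmult_le_of_Rabs_le_1 b2 1 1 Hb2 Hone). lra. }
  lra.
Qed.

Section Doubling.

Variables (beta CF LF Lf K : R) (lam : R -> R) (G r h : R -> R -> R).
Hypothesis beta_gt0 : 0 < beta.
Hypothesis K_ge0 : 0 <= K.
Hypothesis K_rate : K * LF + Lf <= K * beta.
Hypothesis drift_bounded : forall z t, Rabs (lam t * G z t) <= CF.
Hypothesis drift_lipschitz : lipschitz2 LF (fun z t => lam t * G z t).
Hypothesis reward_lipschitz : lipschitz2 Lf (fun z t => lam t * r z t).
Hypothesis h_bounded : bounded2 h.
Hypothesis h_cont : cont2 h.
Hypothesis h_sub : visc_sub beta lam G r h.
Hypothesis h_super : visc_super beta lam G r h.

Definition doubling_fun (e al x s y u : R) : R :=
  h x s - h y u - K * reg_dist e y u x s - al * (reg_dist 1 0 0 x s + reg_dist 1 0 0 y u).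

Definition doubling_fun4 (e al : R) (p : Compactness.Tn 4 R) : R :=
  let '(x, (s, (y, (u, _)))) := p in doubling_fun e al x s y u.

Lemma doubling_fun_sub_le e al x s y u x' s' y' u' d : 0 <= e -> 0 <= al ->
  Rabs (x' - x) < d -> Rabs (s' - s) < d -> Rabs (y' - y) < d -> Rabs (u' - u) < d ->
  doubling_fun e al x' s' y' u' - doubling_fun e al x s y u
    <= Rabs (h x' s' - h x s) + Rabs (h y' u' - h y u) + 4 * (K + al) * d.
Proof.
  intros He Hal Hx Hs Hy Hu. unfold doubling_fun.
  assert (Hpen : Rabs (reg_dist e y' u' x' s' - reg_dist e y u x s) <= 4 * d).
  { eapply Rle_trans; [apply reg_dist_lipschitz, He|].
    pose proof (Rabs_triang (x' - x) (- (y' - y))); pose proof (Rabs_triang (s' - s) (- (u' - u))).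
    rewrite Rabs_Ropp in *.
    replace (x' - y' - (x - y)) with (x' - x + - (y' - y)) by ring.
    replace (s' - u' - (s - u)) with (s' - s + - (u' - u)) by ring. lra. }
  assert (Hgx : Rabs (reg_dist 1 0 0 x' s' - reg_dist 1 0 0 x s) <= 2 * d).
  { eapply Rle_trans; [apply reg_dist_lipschitz; lra|]. rewrite !Rminus_0_r. lra. }
  assert (Hgy : Rabs (reg_dist 1 0 0 y' u' - reg_dist 1 0 0 y u) <= 2 * d).
  { eapply Rle_trans; [apply reg_dist_lipschitz; lra|]. rewrite !Rminus_0_r. lra. }
  pose proof (Rle_abs (h x' s' - h x s)); pose proof (Rabs_maj2 (h y' u' - h y u)).
  apply Rabs_le_between in Hpen, Hgx, Hgy.
  assert (K * (reg_dist e y u x s - reg_dist e y' u' x' s') <= K * (4 * d))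
    by (apply Rmult_le_compat_l; lra).
  assert (al * (reg_dist 1 0 0 x s + reg_dist 1 0 0 y u
                - reg_dist 1 0 0 x' s' - reg_dist 1 0 0 y' u') <= al * (4 * d))
    by (apply Rmult_le_compat_l; lra).
  lra.
Qed.

Lemma doubling_fun4_usc e al : 0 <= e -> 0 <= al ->
  forall p eps, 0 < eps -> exists d, 0 < d /\
    forall q, close_n 4 d q p -> doubling_fun4 e al q < doubling_fun4 e al p + eps.
Proof.
  intros He Hal [x [s [y [u []]]]] eps Heps.
  destruct (proj1 (cont2_at_iff_continuity_2d_pt h x s) (h_cont x s)
              (mkposreal (eps / 4) ltac:(lra))) as [d1 Hd1].
  destruct (proj1 (cont2_at_iff_continuity_2d_pt h y u) (h_cont y u)
              (mkposreal (eps / 4) ltac:(lra))) as [d2 Hd2].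
  set (d3 := eps / (8 * (K + al) + 1)).
  assert (Hd3 : 0 < d3) by (apply Rdiv_lt_0_compat; lra).
  assert (Hd3eps : (8 * (K + al) + 1) * d3 = eps) by (unfold d3; field; lra).
  set (d := Rmin (Rmin d1 d2) d3).
  assert (Hdd : d <= d1 /\ d <= d2 /\ d <= d3).
  { unfold d. pose proof (Rmin_l (Rmin d1 d2) d3); pose proof (Rmin_r (Rmin d1 d2) d3).
    pose proof (Rmin_l d1 d2); pose proof (Rmin_r d1 d2). lra. }
  assert (Hd : 0 < d)
    by (pose proof (cond_pos d1); pose proof (cond_pos d2); repeat apply Rmin_pos; lra).
  exists d. split; [exact Hd|].
  intros [x' [s' [y' [u' []]]]] [Hx [Hs [Hy [Hu _]]]]. simpl in *.
  pose proof (doubling_fun_sub_le e al x s y u x' s' y' u' d He Hal Hx Hs Hy Hu).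
  assert (Rabs (h x' s' - h x s) < eps / 4) by (apply Hd1; lra).
  assert (Rabs (h y' u' - h y u) < eps / 4) by (apply Hd2; lra).
  assert (4 * (K + al) * d <= 4 * (K + al) * d3) by (apply Rmult_le_compat_l; lra).
  lra.
Qed.

Lemma doubling_fun_has_max e al : 0 < e -> 0 < al ->
  exists x1 s1 x2 s2, forall x s y u,
    doubling_fun e al x s y u <= doubling_fun e al x1 s1 x2 s2.
Proof.
  intros He Hal. destruct h_bounded as [B HB].
  assert (HB0 : 0 <= B) by (eapply Rle_trans; [apply Rabs_pos|apply (HB 0 0)]).
  set (c0 := doubling_fun e al 0 0 0 0).
  assert (Hc0 : c0 <= 0).
  { unfold c0, doubling_fun. pose proof (reg_dist_gt0 e 0 0 0 0 He).
    pose proof (reg_dist_gt0 1 0 0 0 0 Rlt_0_1).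
    assert (0 <= K * reg_dist e 0 0 0 0) by (apply Rmult_le_pos; lra).
    assert (0 <= al * (reg_dist 1 0 0 0 0 + reg_dist 1 0 0 0 0)) by (apply Rmult_le_pos; lra).
    lra. }
  set (rad := (2 * B - c0) / al).
  set (box := bounded_n 4 (- rad, (- rad, (- rad, (- rad, tt)))) (rad, (rad, (rad, (rad, tt))))).
  assert (Hbox : forall x s y u, c0 <= doubling_fun e al x s y u -> box (x, (s, (y, (u, tt))))).
  { intros x s y u Hxsyu. unfold doubling_fun in Hxsyu.
    assert (0 <= K * reg_dist e y u x s)
      by (apply Rmult_le_pos; [|apply Rlt_le, reg_dist_gt0]; lra).
    pose proof (HB x s) as Hx; pose proof (HB y u) as Hy.
    apply Rabs_le_between in Hx, Hy.
    assert (Hpen : reg_dist 1 0 0 x s + reg_dist 1 0 0 y u <= rad).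
    { unfold rad. apply Rle_div_r; [exact Hal|]. lra. }
    destruct (Rabs_sub_le_reg_dist 1 0 0 x s) as [Hxs1 Hxs2]; [lra|].
    destruct (Rabs_sub_le_reg_dist 1 0 0 y u) as [Hyu1 Hyu2]; [lra|].
    rewrite !Rminus_0_r in Hxs1, Hxs2, Hyu1, Hyu2.
    pose proof (reg_dist_gt0 1 0 0 x s Rlt_0_1); pose proof (reg_dist_gt0 1 0 0 y u Rlt_0_1).
    apply Rabs_le_between in Hxs1, Hxs2, Hyu1, Hyu2.
    unfold box; simpl. repeat split; lra. }
  assert (Hrad : 0 <= rad) by (apply Rdiv_le_0_compat; lra).
  assert (H0box : box (0, (0, (0, (0, tt))))) by (unfold box; simpl; repeat split; lra).
  destruct (usc_attains_max_on_box 4 (doubling_fun4 e al) _ _ _ H0box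
              (doubling_fun4_usc e al (Rlt_le _ _ He) (Rlt_le _ _ Hal)))
    as [[x1 [s1 [x2 [s2 []]]]] [_ Hmax]].
  exists x1, s1, x2, s2. intros x s y u.
  destruct (Rle_dec c0 (doubling_fun e al x s y u)) as [Hc|Hc].
  - exact (Hmax (x, (s, (y, (u, tt)))) (Hbox x s y u Hc)).
  - pose proof (Hmax _ H0box) as H0. simpl in H0. fold c0 in H0. lra.
Qed.

Lemma doubling_gap_at_max e al x1 s1 x2 s2 : 0 < e -> 0 < al ->
  (forall x s y u, doubling_fun e al x s y u <= doubling_fun e al x1 s1 x2 s2) ->
  h x1 s1 - h x2 s2 <= K * reg_dist e x2 s2 x1 s1 + 2 * al * (CF + 1) / beta.
Proof.
  intros He Hal Hmax. unfold doubling_fun in Hmax.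
  assert (Hsub := h_sub _ _ _ x1 s1
    (C1_with_lin K al _ _ _ _ _ _ (reg_dist_C1 e x2 s2 He) (reg_dist_C1 1 0 0 Rlt_0_1))).
  assert (Hsup := h_super _ _ _ x2 s2
    (C1_with_lin (- K) (- al) _ _ _ _ _ _ (reg_dist_C1 e x1 s1 He) (reg_dist_C1 1 0 0 Rlt_0_1))).
  specialize (Hsub ltac:(exists 1; split; [lra|]; intros z t _;
    pose proof (Hmax z t x2 s2); lra)).
  specialize (Hsup ltac:(exists 1; split; [lra|]; intros z t _;
    pose proof (Hmax x1 s1 z t);
    rewrite (reg_dist_sym e z t x1 s1), (reg_dist_sym e x2 s2 x1 s1) in *; lra)).
  cbv beta in Hsub, Hsup. rewrite (reg_dist_sym e x1 s1 x2 s2) in Hsup.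
  set (psi := reg_dist e x2 s2 x1 s1) in *.
  set (g1 := reg_dist 1 0 0 x1 s1) in *; set (g2 := reg_dist 1 0 0 x2 s2) in *.
  assert (Hpsi : 0 < psi) by apply reg_dist_gt0, He.
  assert (0 < g2) by apply reg_dist_gt0, Rlt_0_1.
  replace (- K * ((x2 - x1) / psi) + - al * ((x2 - 0) / g2))
    with (K * ((x1 - x2) / psi) - al * ((x2 - 0) / g2)) in Hsup by (field; lra).
  replace (- K * ((s2 - s1) / psi) + - al * ((s2 - 0) / g2))
    with (K * ((s1 - s2) / psi) - al * ((s2 - 0) / g2)) in Hsup by (field; lra).
  set (D := dist2 x1 s1 x2 s2).
  assert (HDpsi : D <= psi) by (apply dist2_le_reg_dist; lra).
  assert (HD : 0 <= D) by apply dist2_ge0.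
  destruct (reg_dist_grad_bounded e x2 s2 x1 s1 He) as [Hu _].
  destruct (reg_dist_grad_bounded 1 0 0 x1 s1 Rlt_0_1) as [Ha1 Hb1].
  destruct (reg_dist_grad_bounded 1 0 0 x2 s2 Rlt_0_1) as [Ha2 Hb2].
  fold psi g1 g2 in Hu, Ha1, Hb1, Ha2, Hb2.
  assert (Hr : lam s1 * r x1 s1 - lam s2 * r x2 s2 <= Lf * D)
    by (eapply Rle_trans; [apply Rle_abs|apply reward_lipschitz]).
  pose proof (Ham_gap_le beta lam G r x1 s1 x2 s2 _ _ K al _ _ _ _ _ _ CF LF Lf D
    K_ge0 (Rlt_le _ _ Hal) Hu Ha1 Hb1 Ha2 Hb2 (drift_bounded _ _) (drift_bounded _ _)
    (drift_lipschitz _ _ _ _) Hr Hsub Hsup) as Hgap.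
  assert (Hrate : (K * LF + Lf) * D <= K * beta * psi).
  { apply Rle_trans with (K * beta * D); [apply Rmult_le_compat_r; lra|].
    apply Rmult_le_compat_l; [apply Rmult_le_pos; lra|exact HDpsi]. }
  apply (Rmult_le_reg_l beta); [exact beta_gt0|].
  replace (beta * (K * psi + 2 * al * (CF + 1) / beta))
    with (beta * (K * psi) + 2 * al * (CF + 1)) by (field; lra).
  lra.
Qed.

Lemma doubling_estimate e al z1 t1 z2 t2 : 0 < e -> 0 < al ->
  h z1 t1 - h z2 t2 <= K * reg_dist e z2 t2 z1 t1
    + al * (reg_dist 1 0 0 z1 t1 + reg_dist 1 0 0 z2 t2 + 2 * (CF + 1) / beta).
Proof.
  intros He Hal.
  destruct (doubling_fun_has_max e al He Hal) as [x1 [s1 [x2 [s2 Hmax]]]].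
  pose proof (doubling_gap_at_max e al x1 s1 x2 s2 He Hal Hmax) as Hgap.
  specialize (Hmax z1 t1 z2 t2). unfold doubling_fun in Hmax.
  pose proof (reg_dist_gt0 1 0 0 x1 s1 Rlt_0_1); pose proof (reg_dist_gt0 1 0 0 x2 s2 Rlt_0_1).
  assert (0 <= al * (reg_dist 1 0 0 x1 s1 + reg_dist 1 0 0 x2 s2))
    by (apply Rmult_le_pos; lra).
  replace (2 * al * (CF + 1) / beta) with (al * (2 * (CF + 1) / beta)) in Hgap
    by (field; lra).
  lra.
Qed.

Lemma visc_sol_one_sided_lipschitz z1 t1 z2 t2 :
  h z1 t1 - h z2 t2 <= K * dist2 z1 t1 z2 t2.
Proof.
  apply Rle_plus_epsilon. intros eps Heps.
  set (X := reg_dist 1 0 0 z1 t1 + reg_dist 1 0 0 z2 t2 + 2 * (CF + 1) / beta).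
  set (q := eps / (2 * (K + 1))); set (al := eps / (2 * (Rabs X + 1))).
  assert (Hq : 0 < q) by (apply Rdiv_lt_0_compat; lra).
  assert (HX : 0 <= Rabs X) by apply Rabs_pos.
  assert (Hal : 0 < al) by (apply Rdiv_lt_0_compat; lra).
  assert (Hq2 : 0 < q ^ 2) by (apply pow_lt; exact Hq).
  pose proof (doubling_estimate (q ^ 2) al z1 t1 z2 t2 Hq2 Hal) as Hest. fold X in Hest.
  pose proof (reg_dist_le_dist2_add_sqrt (q ^ 2) z2 t2 z1 t1 (Rlt_le _ _ Hq2)) as Hreg.
  rewrite sqrt_pow2 in Hreg by lra.
  assert (HKq : (K + 1) * q = eps / 2) by (unfold q; field; lra).
  assert (HalX : al * (Rabs X + 1) = eps / 2) by (unfold al; field; lra).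
  assert (al * X <= al * Rabs X) by (apply Rmult_le_compat_l; [lra|apply Rle_abs]).
  assert (K * reg_dist (q ^ 2) z2 t2 z1 t1 <= K * (dist2 z1 t1 z2 t2 + q))
    by (apply Rmult_le_compat_l; lra).
  lra.
Qed.

End Doubling.

Lemma lipschitz2_of_one_sided L f :
  (forall z1 t1 z2 t2, f z1 t1 - f z2 t2 <= L * dist2 z1 t1 z2 t2) -> lipschitz2 L f.
Proof.
  intros Hf z1 t1 z2 t2. apply Rabs_le.
  pose proof (Hf z1 t1 z2 t2); pose proof (Hf z2 t2 z1 t1).
  rewrite (dist2_sym z2 t2 z1 t1) in *. lra.
Qed.

Lemma lipschitz2_loc_lipschitz2 L f : lipschitz2 L f -> loc_lipschitz2 L f.
Proof. intros Hf. exists 1. split; [lra|]. intros z1 t1 z2 t2 _. apply Hf. Qed.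

Lemma lipschitz2_time_factor_mul (lam : R -> R) (G : R -> R -> R) Ll hi LG M :
  (forall t1 t2, Rabs (lam t1 - lam t2) <= Ll * Rabs (t1 - t2)) ->
  (forall t, Rabs (lam t) <= hi) ->
  lipschitz2 LG G -> (forall z t, Rabs (G z t) <= M) ->
  lipschitz2 (hi * Rabs LG + Rabs M * Rabs Ll) (fun z t => lam t * G z t).
Proof.
  intros Hlam Hhi HG HGM z1 t1 z2 t2.
  set (D := dist2 z1 t1 z2 t2).
  assert (HD : 0 <= D) by apply dist2_ge0.
  assert (Ht : Rabs (t1 - t2) <= D) by apply Rabs_sub_snd_le_dist2.
  replace (lam t1 * G z1 t1 - lam t2 * G z2 t2)
    with (lam t1 * (G z1 t1 - G z2 t2) + G z2 t2 * (lam t1 - lam t2)) by ring.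
  eapply Rle_trans; [apply Rabs_triang|]. rewrite !Rabs_mult.
  assert (HGd : Rabs (G z1 t1 - G z2 t2) <= Rabs LG * D).
  { eapply Rle_trans; [apply HG|]. apply Rmult_le_compat_r; [exact HD|apply Rle_abs]. }
  assert (Hld : Rabs (lam t1 - lam t2) <= Rabs Ll * D).
  { eapply Rle_trans; [apply Hlam|].
    apply Rle_trans with (Rabs Ll * Rabs (t1 - t2)).
    - apply Rmult_le_compat_r; [apply Rabs_pos|apply Rle_abs].
    - apply Rmult_le_compat_l; [apply Rabs_pos|exact Ht]. }
  assert (HGz : Rabs (G z2 t2) <= Rabs M) by (eapply Rle_trans; [apply HGM|apply Rle_abs]).
  pose proof (Rabs_pos (lam t1)); pose proof (Rabs_pos (G z2 t2)).
  pose proof (Rabs_pos (G z1 t1 - G z2 t2)); pose proof (Rabs_pos (lam t1 - lam t2)).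
  assert (Rabs (lam t1) * Rabs (G z1 t1 - G z2 t2) <= hi * (Rabs LG * D))
    by (apply Rmult_le_compat; auto).
  assert (Rabs (G z2 t2) * Rabs (lam t1 - lam t2) <= Rabs M * (Rabs Ll * D))
    by (apply Rmult_le_compat; auto).
  lra.
Qed.

Theorem lemmaF6
  (Theta : Type) (lam : R -> R) (Gb rb : Theta -> R -> R -> R) (M Tp : R)
  (* Assumption 1 *)
  (HGlip : exists LG, forall th, lipschitz2 LG (Gb th))
  (Hrlip : exists Lr, forall th, lipschitz2 Lr (rb th))
  (Hlam_lip : exists Ll, forall t1 t2, Rabs (lam t1 - lam t2) <= Ll * Rabs (t1 - t2))
  (Hlam_bd : exists lo hi, 0 < lo /\ forall t, lo <= lam t /\ lam t <= hi)
  (HGbd : forall th z t, Rabs (Gb th z t) <= M)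
  (Hrbd : forall th z t, Rabs (rb th z t) <= M)
  (* periodic specification *)
  (HTp : 0 < Tp)
  (Hlam_per : forall t, lam (t + Tp) = lam t)
  (HG_per : forall th, periodic_t Tp (Gb th))
  (Hr_per : forall th, periodic_t Tp (rb th)) :
  exists beta0 : R, forall beta : R, beta0 < beta ->
  forall h : Theta -> R -> R -> R,
    (forall th, bounded2 (h th) /\ periodic_t Tp (h th) /\
                visc_sol beta lam (Gb th) (rb th) (h th)) ->
    exists L1 : R, forall th, loc_lipschitz2 L1 (h th).
Proof.
  destruct HGlip as [LG HG], Hrlip as [Lr Hr], Hlam_lip as [Ll Hl].
  destruct Hlam_bd as [lo [hi [Hlo Hbd]]].
  assert (Hlam_abs : forall t, Rabs (lam t) <= hi)
    by (intros t; destruct (Hbd t); rewrite Rabs_pos_eq; lra).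
  assert (Hhi : 0 <= hi) by (eapply Rle_trans; [apply Rabs_pos|apply (Hlam_abs 0)]).
  set (LF := hi * Rabs LG + Rabs M * Rabs Ll); set (Lf := hi * Rabs Lr + Rabs M * Rabs Ll).
  assert (HLF : 0 <= LF) by (unfold LF; pose proof (Rabs_pos LG); pose proof (Rabs_pos M);
    pose proof (Rabs_pos Ll); nra).
  assert (HLf : 0 <= Lf) by (unfold Lf; pose proof (Rabs_pos Lr); pose proof (Rabs_pos M);
    pose proof (Rabs_pos Ll); nra).
  exists LF. intros beta Hbeta h Hh.
  set (K := Lf / (beta - LF)).
  assert (HK : 0 <= K) by (apply Rdiv_le_0_compat; lra).
  assert (HKrate : K * LF + Lf <= K * beta) by (right; unfold K; field; lra).
  exists K. intros th. destruct (Hh th) as [Hbdd [_ [Hcont [Hsub Hsup]]]].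
  apply lipschitz2_loc_lipschitz2, lipschitz2_of_one_sided.
  apply (visc_sol_one_sided_lipschitz beta (hi * Rabs M) LF Lf K lam (Gb th) (rb th) (h th));
    try assumption; try lra.
  - intros z t. rewrite Rabs_mult.
    apply Rmult_le_compat; try apply Rabs_pos; [apply Hlam_abs|].
    eapply Rle_trans; [apply HGbd|apply Rle_abs].
  - exact (lipschitz2_time_factor_mul lam (Gb th) Ll hi LG M Hl Hlam_abs (HG th) (HGbd th)).
  - exact (lipschitz2_time_factor_mul lam (rb th) Ll hi Lr M Hl Hlam_abs (Hr th) (Hrbd th)).
Qed.
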